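(* Let $S\subseteq\mathbb{R}^n\times\mathbb{R}^m$ be convex, let (CP) be bounded and fix $p\in[1,\infty]$. If $\bar S\subseteq S$ is a finite $\epsilon$-solution of (CP), then $\bar S$ is a Hausdorff-type finite $(\|Q\|\epsilon)$-solution of (MOCP), where $\|Q\|=(m^{p-1}+1)^{1/p}$ is the operator norm of $Q$ induced by the $p$-norms (equal to $m$ for $p=\infty$).
   Context: $\|\cdot\|$ is the $p$-norm, $B_\epsilon$ its closed $\epsilon$-ball. (CP): compute $Y=\{y:\exists x,(x,y)\in S\}$; bounded means $Y\subseteq B_K$ for some $K$; a nonempty finite $\bar S\subseteq S$ is a finite $\epsilon$-solution if $Y\subseteq\operatorname{conv}\operatorname{proj}_y[\bar S]+B_\epsilon$. $P(x,y)=(y,-\mathbf{1}^\top y)$, $Qy=(y,-\mathbf{1}^\top y)$, with $\mathbf{1}\in\mathbb{R}^m$ all-ones. (MOCP): minimize $P(x,y)$ w.r.t. $\le_{\mathbb{R}^{m+1}_+}$ over $(x,y)\in S$, upper image $\mathcal{P}=\operatorname{cl}(P[S]+\mathbb{R}^{m+1}_+)$. Hausdorff distance $d_H(A_1,A_2)=\max\{\sup_{a_1\in A_1}\inf_{a_2\in A_2}\|a_1-a_2\|,\sup_{a_2\in A_2}\inf_{a_1\in A_1}\|a_1-a_2\|\}$. A nonempty finite $\bar S\subseteq S$ is a Hausdorff-type finite $\epsilon$-solution of (MOCP) if $d_H(\mathcal{P},\operatorname{conv}P[\bar S]+\mathbb{R}^{m+1}_+)\le\epsilon$. *)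

From HB Require Import structures.
From mathcomp Require Import all_boot all_order all_algebra.
From mathcomp Require Import all_classical all_reals all_analysis.
Set Implicit Arguments. Unset Strict Implicit. Unset Printing Implicit Defensive.
Import Order.TTheory GRing.Theory Num.Theory.
Import numFieldNormedType.Exports.
Local Open Scope classical_set_scope.
Local Open Scope ring_scope.

Definition pnorm (R : realType) (p : \bar R) (k : nat) (x : 'rV[R]_k) : R :=
  match p with
  | EFin r => (\sum_(i < k) `|x ord0 i| `^ r) `^ r^-1
  | _ => \big[Num.max/0]_(i < k) `|x ord0 i|
  end.
Arguments pnorm {R} p {k} x.

(* operator norm of Q induced by p-norms: (m^(p-1)+1)^(1/p), and m for p = oo *)
Definition Qnorm (R : realType) (p : \bar R) (m : nat) : R :=
  match p with
  | EFin r => ((m%:R) `^ (r - 1) + 1) `^ r^-1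
  | _ => m%:R
  end.
Arguments Qnorm {R} p m.

Definition pball (R : realType) (p : \bar R) (k : nat) (eps : R) : set 'rV[R]_k :=
  [set z | pnorm p z <= eps].
Arguments pball {R} p k eps.

Definition msum (R : realType) (k : nat) (A B : set 'rV[R]_k) : set 'rV[R]_k :=
  [set a + b | a in A & b in B].
Arguments msum {R k} A B.

Definition orthant (R : realType) (k : nat) : set 'rV[R]_k :=
  [set d | forall i, 0 <= d ord0 i].
Arguments orthant {R} k.

Definition conv (R : realType) (k : nat) (A : set 'rV[R]_k) : set 'rV[R]_k :=
  [set z | exists (N : nat) (w : 'I_N -> R) (a : 'I_N -> 'rV[R]_k),
     (forall i, 0 <= w i) /\ \sum_(i < N) w i = 1 /\ (forall i, A (a i)) /\
     z = \sum_(i < N) w i *: a i].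
Arguments conv {R k} A.

Definition convex_set2 (R : realType) (n m : nat)
  (S : set ('rV[R]_n * 'rV[R]_m)) : Prop :=
  forall a b, S a -> S b -> forall l : R, 0 <= l <= 1 ->
    S (l *: a.1 + (1 - l) *: b.1, l *: a.2 + (1 - l) *: b.2).
Arguments convex_set2 {R n m} S.

Definition projY (R : realType) (n m : nat) (S : set ('rV[R]_n * 'rV[R]_m))
  : set 'rV[R]_m := [set xy.2 | xy in S].
Arguments projY {R n m} S.

Definition CP_bounded (R : realType) (p : \bar R) (n m : nat)
  (S : set ('rV[R]_n * 'rV[R]_m)) : Prop :=
  exists K : R, projY S `<=` pball p m K.
Arguments CP_bounded {R} p {n m} S.

Definition finite_eps_solution_CP (R : realType) (p : \bar R) (n m : nat)
  (S Sbar : set ('rV[R]_n * 'rV[R]_m)) (eps : R) : Prop :=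
  [/\ finite_set Sbar, Sbar !=set0, Sbar `<=` S &
      projY S `<=` msum (conv (projY Sbar)) (pball p m eps)].
Arguments finite_eps_solution_CP {R} p {n m} S Sbar eps.

Definition Pobj (R : realType) (n m : nat) (xy : 'rV[R]_n * 'rV[R]_m)
  : 'rV[R]_(m + 1) :=
  row_mx xy.2 (\row_(j < 1) - \sum_(i < m) xy.2 ord0 i).
Arguments Pobj {R n m} xy.

Definition upper_image (R : realType) (n m : nat) (S : set ('rV[R]_n * 'rV[R]_m))
  : set 'rV[R]_(m + 1) :=
  closure (msum (Pobj @` S) (orthant (m + 1))).
Arguments upper_image {R n m} S.

Definition hausdorff (R : realType) (p : \bar R) (k : nat) (A1 A2 : set 'rV[R]_k)
  : \bar R :=
  maxe (ereal_sup [set ereal_inf [set (pnorm p (a1 - a2))%:E | a2 in A2] | a1 in A1])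
       (ereal_sup [set ereal_inf [set (pnorm p (a1 - a2))%:E | a1 in A1] | a2 in A2]).
Arguments hausdorff {R} p {k} A1 A2.

Definition hausdorff_finite_eps_solution_MOCP (R : realType) (p : \bar R) (n m : nat)
  (S Sbar : set ('rV[R]_n * 'rV[R]_m)) (eps : R) : Prop :=
  [/\ finite_set Sbar, Sbar !=set0, Sbar `<=` S &
      (hausdorff p (upper_image S)
         (msum (conv (Pobj @` Sbar)) (orthant (m + 1))) <= eps%:E)%E].
Arguments hausdorff_finite_eps_solution_MOCP {R} p {n m} S Sbar eps.

From Pilot Require Import Defs.
From HB Require Import structures.
From mathcomp Require Import all_boot all_order all_algebra.
From mathcomp Require Import all_classical all_reals all_analysis.
From mathcomp Require Import lra.
Set Implicit Arguments. Unset Strict Implicit. Unset Printing Implicit Defensive.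
Import Order.TTheory GRing.Theory Num.Theory.
Import numFieldNormedType.Exports.
Local Open Scope classical_set_scope.
Local Open Scope ring_scope.

(* The objective factors as P(x, y) = Q y, where Q y = (y, -1^T y) is linear. *)

Section ObjectiveMap.
Variable R : realType.

Definition Qmap m (y : 'rV[R]_m) : 'rV[R]_(m + 1) :=
  row_mx y (\row_(j < 1) - \sum_(i < m) y ord0 i).

Definition Qmx m : 'M[R]_(m, m + 1) := row_mx 1%:M (const_mx (-1)).

Lemma QmapE m (y : 'rV[R]_m) : Qmap y = y *m Qmx m.
Proof.
rewrite /Qmap /Qmx mul_mx_row mulmx1; congr row_mx.
apply/rowP => j; rewrite !mxE -sumrN; apply: eq_bigr => i _.
by rewrite !mxE mulrN1.
Qed.

Lemma PobjE n m (xy : 'rV[R]_n * 'rV[R]_m) : Pobj xy = xy.2 *m Qmx m.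
Proof. exact: QmapE. Qed.

End ObjectiveMap.

Section FinitePNorm.
Variable R : realType.

(* A row vector seen as a finitely supported sequence, so that the L^p theory
   of the counting measure on nat applies to it. *)
Definition rv_seq k (v : 'rV[R]_k) (j : nat) : R :=
  \sum_(i < k | val i == j) v ord0 i.

Lemma rv_seq_ord k (v : 'rV[R]_k) (i : 'I_k) : rv_seq v i = v ord0 i.
Proof. by rewrite /rv_seq (big_pred1 i). Qed.

Lemma rv_seq_out k (v : 'rV[R]_k) j : (k <= j)%N -> rv_seq v j = 0.
Proof.
move=> kj; rewrite /rv_seq big1 // => i /eqP ij.
by move: (ltn_ord i); rewrite ij ltnNge kj.
Qed.

Lemma rv_seqD k (x y : 'rV[R]_k) j : rv_seq (x + y) j = rv_seq x j + rv_seq y j.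
Proof. by rewrite /rv_seq -big_split; apply: eq_bigr => i _; rewrite mxE. Qed.

(* Every sequence is measurable for the discrete sigma-algebra on nat. *)
Lemma measurable_rv_seq k (v : 'rV[R]_k) : measurable_fun [set: nat] (rv_seq v).
Proof. by []. Qed.

Lemma nneseries_rv_seq k (v : 'rV[R]_k) (F : R -> R) :
  F 0 = 0 -> (forall x, 0 <= F x) ->
  (\sum_(j <oo) (F (rv_seq v j))%:E = (\sum_(i < k) F (v ord0 i))%:E)%E.
Proof.
move=> F0 F_ge0.
rewrite (nneseries_split 0 k); last by move=> j _; rewrite lee_fin.
rewrite add0n ereal_series_cond eseries0 ?adde0; last first.
  by move=> j _ /andP[kj _]; rewrite rv_seq_out // F0.
by rewrite big_mkord sumEFin; congr (_%:E); apply: eq_bigr => i _; rewrite rv_seq_ord.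
Qed.

Lemma Lnorm_rv_seq k r (v : 'rV[R]_k) : 0 < r ->
  Lnorm counting r%:E (EFin \o rv_seq v) = (pnorm r%:E v)%:E.
Proof.
move=> r_gt0; rewrite Lnorm_counting //.
under eq_eseriesr => j _ do rewrite compE abse_EFin poweR_EFin.
rewrite (nneseries_rv_seq v (F := fun x => `|x| `^ r)) ?poweR_EFin //.
by rewrite normr0 powR0 // gt_eqF.
Qed.

Lemma pnorm_fin_triangle k r (x y : 'rV[R]_k) : 1 <= r ->
  pnorm r%:E (x + y) <= pnorm r%:E x + pnorm r%:E y.
Proof.
move=> r_ge1; have r_gt0 : 0 < r by rewrite (lt_le_trans _ r_ge1).
have := minkowski_EFin counting (measurable_rv_seq x) (measurable_rv_seq y) r_ge1.
rewrite !Lnorm_rv_seq // (eq_Lnorm _ _ (g := EFin \o rv_seq (x + y))).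
  by rewrite Lnorm_rv_seq // lee_fin.
by move=> j /=; rewrite rv_seqD.
Qed.

Lemma hoelder_sum m r (b : 'rV[R]_m) : 1 < r ->
  `|\sum_(i < m) b ord0 i| <= pnorm r%:E b * m%:R `^ (1 - r^-1).
Proof.
move=> r_gt1; have r_gt0 : 0 < r by rewrite (lt_trans _ r_gt1).
pose q := (1 - r^-1)^-1.
have q_gt0 : 0 < q by rewrite invr_gt0 subr_gt0 invf_lt1.
have conj_pq : r^-1 + q^-1 = 1 by rewrite invrK addrC subrK.
have := hoelder counting (measurable_rv_seq b)
  (measurable_rv_seq (const_mx 1 : 'rV[R]_m)) r_gt0 q_gt0 conj_pq.
rewrite !Lnorm_rv_seq // (eq_Lnorm _ _ (g := EFin \o rv_seq b)); last first.
  move=> j /=; case: (ltnP j m) => jm.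
    by rewrite -[j]/(val (Ordinal jm)) !rv_seq_ord mxE mulr1.
  by rewrite !rv_seq_out // mulr0.
rewrite (Lnorm_rv_seq _ ltr01) lee_fin => holder1.
apply: le_trans (le_trans _ holder1) _.
  rewrite /= invr1 powRr1; last by apply: sumr_ge0 => i _; rewrite powR_ge0.
  apply: le_trans (ler_norm_sum _ _ _) _.
  by apply: ler_sum => i _; rewrite powRr1.
apply: ler_wpM2l; first exact: powR_ge0.
rewrite /= /q invrK; under eq_bigr do rewrite mxE normr1 powR1.
by rewrite sumr_const card_ord.
Qed.

Lemma pnorm_fin_le k r (v : 'rV[R]_k) M : 0 < r -> 0 <= M ->
  (forall i, `|v ord0 i| <= M) -> pnorm r%:E v <= k%:R `^ r^-1 * M.
Proof.
move=> r_gt0 M_ge0 vM /=.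
have pow_ge0 (x : R) : 0 <= x `^ r by exact: powR_ge0.
apply: (@le_trans _ _ ((k%:R * M `^ r) `^ r^-1)).
  apply: ge0_ler_powR; first by rewrite invr_ge0 ltW.
  - by rewrite nnegrE sumr_ge0.
  - by rewrite nnegrE mulr_ge0.
  rewrite (_ : k%:R * M `^ r = \sum_(i < k) M `^ r); last first.
    by rewrite sumr_const card_ord mulr_natl.
  apply: ler_sum => i _.
  by apply: ge0_ler_powR; [exact: ltW | rewrite nnegrE | rewrite nnegrE | exact: vM].
by rewrite powRM // -powRrM mulfV ?gt_eqF // powRr1.
Qed.

Lemma norm_sum_powR m r (b : 'rV[R]_m) : 1 <= r ->
  `|\sum_(i < m) b ord0 i| `^ r <= m%:R `^ (r - 1) * \sum_(i < m) `|b ord0 i| `^ r.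
Proof.
move=> r_ge1; have r_gt0 : 0 < r by rewrite (lt_le_trans _ r_ge1).
have sum_ge0 : 0 <= \sum_(i < m) `|b ord0 i| `^ r.
  by apply: sumr_ge0 => i _; rewrite powR_ge0.
move: r_ge1; rewrite le_eqVlt => /predU1P[<-|r_gt1].
  rewrite subrr powRr0 mul1r powRr1 //.
  apply: le_trans (ler_norm_sum _ _ _) _.
  by apply: ler_sum => i _; rewrite powRr1.
have := ge0_ler_powR (ltW r_gt0) _ _ (hoelder_sum b r_gt1).
rewrite !nnegrE normr_ge0 mulr_ge0 ?powR_ge0 // => /(_ isT isT) holder_r.
apply: le_trans holder_r _.
rewrite /= powRM ?powR_ge0 // -!powRrM mulVf ?gt_eqF // powRr1 // mulrC.
by rewrite mulrBl mul1r mulVf ?gt_eqF.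
Qed.

Lemma pnorm_fin_Qmap m r (b : 'rV[R]_m) : 1 <= r ->
  pnorm r%:E (Qmap b) <= Qnorm r%:E m * pnorm r%:E b.
Proof.
move=> r_ge1; have r_gt0 : 0 < r by rewrite (lt_le_trans _ r_ge1).
have sum_ge0 : 0 <= \sum_(i < m) `|b ord0 i| `^ r.
  by apply: sumr_ge0 => i _; rewrite powR_ge0.
have -> : pnorm r%:E (Qmap b) =
    (\sum_(i < m) `|b ord0 i| `^ r + `|\sum_(i < m) b ord0 i| `^ r) `^ r^-1.
  rewrite /= big_split_ord /= big_ord1; congr (_ `^ _); congr (_ + _ `^ _).
    by apply: eq_bigr => i _; rewrite row_mxEl.
  by rewrite row_mxEr mxE normrN.
rewrite /= -powRM ?addr_ge0 ?powR_ge0 ?ler0n //.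
apply: ge0_ler_powR; first by rewrite invr_ge0 ltW.
- by rewrite nnegrE addr_ge0 ?powR_ge0.
- by rewrite nnegrE mulr_ge0 ?addr_ge0 ?powR_ge0.
by rewrite mulrDl mul1r addrC lerD2r norm_sum_powR.
Qed.

End FinitePNorm.

Section MaxNorm.
Variable R : realType.

Lemma pnorm_oo_ge0 k (v : 'rV[R]_k) : 0 <= pnorm +oo%E v.
Proof. by rewrite /=; elim/big_ind: _ => // x y x_ge0 y_ge0; rewrite le_max x_ge0. Qed.

Lemma le_pnorm_oo k (v : 'rV[R]_k) i : `|v ord0 i| <= pnorm +oo%E v.
Proof. exact: le_bigmax. Qed.

Lemma pnorm_oo_le k (v : 'rV[R]_k) M : 0 <= M ->
  (forall i, `|v ord0 i| <= M) -> pnorm +oo%E v <= M.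
Proof. by move=> M_ge0 vM; apply: bigmax_le. Qed.

Lemma pnorm_oo_triangle k (x y : 'rV[R]_k) :
  pnorm +oo%E (x + y) <= pnorm +oo%E x + pnorm +oo%E y.
Proof.
apply: pnorm_oo_le; first by rewrite addr_ge0 ?pnorm_oo_ge0.
by move=> i; rewrite mxE (le_trans (ler_normD _ _)) // lerD ?le_pnorm_oo.
Qed.

Lemma pnorm_oo_Qmap m (b : 'rV[R]_m) :
  pnorm +oo%E (Qmap b) <= Qnorm +oo%E m * pnorm +oo%E b.
Proof.
apply: pnorm_oo_le; first by rewrite mulr_ge0 ?pnorm_oo_ge0.
move=> i; rewrite -[i]splitK; case: (fintype.split i) => j /=.
  rewrite /Qmap row_mxEl (le_trans (le_pnorm_oo _ j)) //.
  rewrite -[X in X <= _]mul1r ler_wpM2r ?pnorm_oo_ge0 // ler1n.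
  exact: leq_ltn_trans (leq0n j) (ltn_ord j).
rewrite /Qmap row_mxEr mxE normrN (le_trans (ler_norm_sum _ _ _)) //.
rewrite (le_trans (ler_sum _ (fun i _ => le_pnorm_oo b i))) //.
by rewrite sumr_const card_ord mulr_natl.
Qed.

End MaxNorm.

Section PNorm.
Variables (R : realType) (p : \bar R).
Hypothesis p_ge1 : (1%:E <= p)%E.

Lemma exponent_cases : (exists2 r, 1 <= r & p = r%:E) \/ p = +oo%E.
Proof. by case: p p_ge1 => [r|_|//]; [rewrite lee_fin => r_ge1; left; exists r | right]. Qed.

Lemma pnorm_ge0 k (v : 'rV[R]_k) : 0 <= pnorm p v.
Proof. by case: exponent_cases => [[r _ ->]|->]; [exact: powR_ge0 | exact: pnorm_oo_ge0]. Qed.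

Lemma pnorm_triangle k (x y : 'rV[R]_k) : pnorm p (x + y) <= pnorm p x + pnorm p y.
Proof.
case: exponent_cases => [[r r_ge1 ->]|->]; last exact: pnorm_oo_triangle.
exact: pnorm_fin_triangle.
Qed.

Lemma pnorm_Qmap m (b : 'rV[R]_m) : pnorm p (Qmap b) <= Qnorm p m * pnorm p b.
Proof.
case: exponent_cases => [[r r_ge1 ->]|->]; last exact: pnorm_oo_Qmap.
exact: pnorm_fin_Qmap.
Qed.

Lemma Qnorm_ge0 m : 0 <= Qnorm p m.
Proof. by case: exponent_cases => [[r _ ->]|->]; [exact: powR_ge0 | exact: ler0n]. Qed.

Lemma pnorm_coord_bound k : exists2 C : R, 0 <= C &
  forall (v : 'rV[R]_k) M, 0 <= M -> (forall i, `|v ord0 i| <= M) -> pnorm p v <= C * M.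
Proof.
case: exponent_cases => [[r r_ge1 ->]|->].
  exists (k%:R `^ r^-1); first exact: powR_ge0.
  by move=> v M; apply: pnorm_fin_le; rewrite (lt_le_trans _ r_ge1).
by exists 1 => // v M M_ge0 vM; rewrite mul1r; exact: pnorm_oo_le.
Qed.

Lemma pnorm0 k : pnorm p (0 : 'rV[R]_k) = 0.
Proof.
have [C _ C_bound] := pnorm_coord_bound k.
apply/eqP; rewrite eq_le pnorm_ge0 andbT -(mulr0 C).
by apply: C_bound => // i; rewrite mxE normr0.
Qed.

End PNorm.

Section Hausdorff.
Variables (R : realType) (p : \bar R) (k : nat).
Hypothesis p_ge1 : (1%:E <= p)%E.

Lemma closure_approx (A : set 'rV[R]_k) a (d : R) : closure A a -> 0 < d ->
  exists2 z, A z & forall i, `|a ord0 i - z ord0 i| < d.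
Proof.
move=> cl_a d_gt0; have [z [Az [_ /(_ ord0) az]]] := cl_a _ (nbhsx_ballx a d d_gt0).
by exists z.
Qed.

Lemma hausdorff_closure_le (A B : set 'rV[R]_k) e : 0 <= e -> B `<=` A ->
  (forall a, A a -> exists2 b, B b & pnorm p (a - b) <= e) ->
  (hausdorff p (closure A) B <= e%:E)%E.
Proof.
move=> e_ge0 BA near_B; rewrite /hausdorff ge_max; apply/andP; split.
- apply: ub_ereal_sup => _ [a cl_a <-]; apply/lee_addgt0Pr => d d_gt0.
  have [C C_ge0 C_bound] := pnorm_coord_bound p_ge1 k.
  pose d' := d / (C + 1).
  have d'_gt0 : 0 < d' by rewrite divr_gt0 //; lra.
  have [z Az az] := closure_approx cl_a d'_gt0.
  have [b Bb zb] := near_B z Az.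
  apply: le_trans (ereal_inf_lbound (ex_intro2 _ _ b Bb erefl)) _.
  have -> : a - b = (a - z) + (z - b) by rewrite addrA subrK.
  rewrite lee_fin (le_trans (pnorm_triangle p_ge1 _ _)) // addrC lerD //.
  apply: le_trans (C_bound _ d' (ltW d'_gt0) _) _.
    by move=> i; rewrite !mxE ltW.
  by rewrite /d' mulrA ler_pdivrMr; [nra | lra].
- apply: ub_ereal_sup => _ [b Bb <-].
  apply: ge_ereal_inf; exists 0%:E; last by rewrite lee_fin.
  exists b; first exact/subset_closure/BA.
  by rewrite subrr pnorm0.
Qed.

End Hausdorff.

Section ConvexCombinations.
Variable R : realType.

Lemma conv_imageP (T : Type) k (f : T -> 'rV[R]_k) (A : set T) c :
  Defs.conv (f @` A) c -> exists N (w : 'I_N -> R) (t : 'I_N -> T),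
    [/\ forall i, 0 <= w i, \sum_(i < N) w i = 1, forall i, A (t i)
      & c = \sum_(i < N) w i *: f (t i)].
Proof.
case=> N [w [a [w_ge0 [w_sum1 [fAa ->]]]]].
have /choice[t tP] : forall i, exists t, A t /\ f t = a i.
  by move=> i; case: (fAa i) => t At <-; exists t.
exists N, w, t; split=> // [i|]; first by case: (tP i).
by apply: eq_bigr => i _; case: (tP i) => _ ->.
Qed.

Lemma conv_image_comb (T : Type) k (f : T -> 'rV[R]_k) (A : set T) N
    (w : 'I_N -> R) (t : 'I_N -> T) :
  (forall i, 0 <= w i) -> \sum_(i < N) w i = 1 -> (forall i, A (t i)) ->
  Defs.conv (f @` A) (\sum_(i < N) w i *: f (t i)).
Proof.
move=> w_ge0 w_sum1 At; exists N, w, (f \o t).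
by do 2!split=> //; split=> // i; exists (t i).
Qed.

Lemma convex_set2_comb n m (S : set ('rV[R]_n * 'rV[R]_m)) N
    (w : 'I_N -> R) (t : 'I_N -> 'rV[R]_n * 'rV[R]_m) :
  convex_set2 S -> (forall i, 0 <= w i) -> \sum_(i < N) w i = 1 ->
  (forall i, S (t i)) ->
  S (\sum_(i < N) w i *: (t i).1, \sum_(i < N) w i *: (t i).2).
Proof.
move=> cS; elim: N w t => [|N IH] w t w_ge0 w_sum1 St.
  by move: w_sum1; rewrite big_ord0 => /eqP; rewrite eq_sym oner_eq0.
rewrite !big_ord_recr /=; move: w_sum1; rewrite big_ord_recr /= => w_sum1.
set l := w ord_max in w_sum1 *.
pose w0 i := w (widen_ord (leqnSn N) i); pose t0 i := t (widen_ord (leqnSn N) i).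
have w0_sum : \sum_(i < N) w0 i = 1 - l by rewrite -w_sum1 addrK.
have [l1|l_neq1] := eqVneq l 1.
  have w0_eq0 i : w (widen_ord (leqnSn N) i) = 0.
    apply: (psumr_eq0P (P := xpredT) (F := w0)) => // [j _|]; first exact: w_ge0.
    by rewrite w0_sum l1 subrr.
  rewrite !big1 ?add0r ?l1 ?scale1r => [|i _|i _]; rewrite ?w0_eq0 ?scale0r //.
  by case: (t ord_max) (St ord_max).
set c := 1 - l in w0_sum.
have c_gt0 : 0 < c by rewrite subr_gt0 lt_neqAle l_neq1 -w_sum1 lerDr sumr_ge0.
have c_neq0 : c != 0 by rewrite gt_eqF.
(* Rescale the first N weights to sum to 1 and use convexity of S. *)
have := IH (fun i => w0 i / c) t0 (fun i => divr_ge0 (w_ge0 _) (ltW c_gt0)).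
rewrite -mulr_suml w0_sum mulfV // => /(_ erefl (fun i => St _)) S_comb.
have c_01 : 0 <= c <= 1 by rewrite (ltW c_gt0) gerBl w_ge0.
have c_compl : 1 - c = l by rewrite /c opprB addrC subrK.
have := cS _ _ S_comb (St ord_max) c c_01; rewrite /= c_compl.
have rescale (V : lmodType R) (x : 'I_N -> V) :
    c *: \sum_(i < N) (w0 i / c) *: x i = \sum_(i < N) w0 i *: x i.
  by rewrite scaler_sumr; apply: eq_bigr => i _; rewrite scalerA mulrCA mulfV // mulr1.
by rewrite !rescale.
Qed.

End ConvexCombinations.

Section FiniteSolutions.
Variables (R : realType) (p : \bar R) (n m : nat).
Variables (S Sbar : set ('rV[R]_n * 'rV[R]_m)) (eps : R).
Hypothesis p_ge1 : (1%:E <= p)%E.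

Lemma Pobj_comb N (w : 'I_N -> R) (t : 'I_N -> 'rV[R]_n * 'rV[R]_m) :
  \sum_(i < N) w i *: Pobj (t i) =
  Pobj (\sum_(i < N) w i *: (t i).1, \sum_(i < N) w i *: (t i).2).
Proof.
rewrite PobjE mulmx_suml; apply: eq_bigr => i _.
by rewrite PobjE scalemxAl.
Qed.

(* A finite eps-solution forces eps >= 0, since Sbar is nonempty. *)
Lemma finite_eps_solution_ge0 : finite_eps_solution_CP p S Sbar eps -> 0 <= eps.
Proof.
case=> _ [s Sbar_s] Sbar_S cover.
have [_ _ [b b_eps _]] := cover s.2 (ex_intro2 _ _ s (Sbar_S _ Sbar_s) erefl).
exact: le_trans (pnorm_ge0 p_ge1 b) b_eps.
Qed.

Lemma approx_sub_image : convex_set2 S -> Sbar `<=` S ->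
  Defs.msum (Defs.conv (Pobj @` Sbar)) (orthant (m + 1)) `<=`
  Defs.msum (Pobj @` S) (orthant (m + 1)).
Proof.
move=> cS Sbar_S _ [u conv_u [d d_ge0 <-]]; exists u; last by exists d.
have [N [w [t [w_ge0 w_sum1 Sbar_t ->]]]] := conv_imageP conv_u.
rewrite Pobj_comb; exists (\sum_(i < N) w i *: (t i).1, \sum_(i < N) w i *: (t i).2) => //.
by apply: convex_set2_comb => // i; apply: Sbar_S.
Qed.

(* Every point P(s) + d of P[S] + R_+ is within ||Q|| eps of conv P[Sbar] + R_+:
   writing y = c + b with c a convex combination of the y-parts of points t_i
   of Sbar and |b| <= eps, the point sum_i w_i P(t_i) + d differs from
   P(s) + d by Q b. *)
Lemma image_near_approx : finite_eps_solution_CP p S Sbar eps ->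
  forall z, Defs.msum (Pobj @` S) (orthant (m + 1)) z ->
  exists2 a, Defs.msum (Defs.conv (Pobj @` Sbar)) (orthant (m + 1)) a &
    pnorm p (z - a) <= Qnorm p m * eps.
Proof.
case=> _ _ _ cover _ [_ [s Ss <-] [d d_ge0 <-]].
have [c conv_c [b b_eps y_eq]] := cover s.2 (ex_intro2 _ _ s Ss erefl).
have [N [w [t [w_ge0 w_sum1 Sbar_t c_eq]]]] := conv_imageP conv_c.
exists (\sum_(i < N) w i *: Pobj (t i) + d).
  by exists (\sum_(i < N) w i *: Pobj (t i)); [exact: conv_image_comb | exists d].
have -> : Pobj s + d - (\sum_(i < N) w i *: Pobj (t i) + d) = Qmap b.
  rewrite Pobj_comb !PobjE QmapE /= -y_eq c_eq mulmxDl.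
  by rewrite [X in X - _]addrAC addrC addrK.
apply: le_trans (pnorm_Qmap p_ge1 b) _.
by rewrite ler_wpM2l ?Qnorm_ge0.
Qed.

End FiniteSolutions.

Theorem mainTheorem16 (R : realType) (n m : nat) (p : \bar R)
  (S Sbar : set ('rV[R]_n * 'rV[R]_m)) (eps : R) :
  (1%:E <= p)%E ->
  convex_set2 S ->
  CP_bounded p S ->
  finite_eps_solution_CP p S Sbar eps ->
  hausdorff_finite_eps_solution_MOCP p S Sbar (Qnorm p m * eps).
Proof.
move=> p_ge1 cS _ sol; have [fin_Sbar Sbar_neq0 Sbar_S _] := sol.
split=> //; apply: hausdorff_closure_le => //.
- by rewrite mulr_ge0 ?Qnorm_ge0 ?(finite_eps_solution_ge0 p_ge1 sol).
- exact: approx_sub_image.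
- exact: image_near_approx.
Qed.
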